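(* Work in a second-order (Bayes linear) belief framework in which $P(\cdot)$ denotes a (primitive) prevision/expectation specified for all quantities below, with variances and covariances $\mathrm{Var}$, $\mathrm{Cov}$ derived from it. For vectors of random quantities $X$ and $W$, define the adjusted expectation of $X$ by $W$ as $$P_W(X)=P(X)+\mathrm{Cov}(X,W)\,\mathrm{Var}(W)^{\dagger}\,\big(W-P(W)\big),$$ where $\dagger$ denotes the Moore–Penrose generalised inverse. Let $m\ge 1$ and $n_1,\dots,n_m\ge 1$, and let $\boldsymbol Z=\{Z_{ij}: i=1,\dots,m,\ j=1,\dots,n_i\}$ be random vectors (all of the same dimension as $X$) such that $Z_{ij}=\mu_i+\mathcal R_{ij}$, where $\mu_1,\dots,\mu_m$ are random vectors, each $\mathcal R_{ij}$ has $P(\mathcal R_{ij})=0$ and is uncorrelated with every $\mu_k$, the residuals $\mathcal R_{ij}$ and $\mathcal R_{kl}$ are uncorrelated for $(i,j)\ne(k,l)$, and $\mathrm{Var}(\mathcal R_{ij})$ does not depend on $j$. Write $\boldsymbol\mu=\mathrm{vec}(\mu_1,\dots,\mu_m)$. Suppose the quantity of interest $X$ satisfies $$X=\sum_{i=1}^m A_i\mu_i+\boldsymbol U=\boldsymbol{\mathcal A}\boldsymbol\mu+\boldsymbol U,$$ where $\boldsymbol{\mathcal A}=(A_1,\dots,A_m)$ is a known (constant) matrix and $\boldsymbol U$ is a random vector uncorrelated with all elements of all $\mu_i$ and all $\mathcal R_{ij}$. Then $$P_{\boldsymbol Z}(X)=P_{P_{\boldsymbol Z}(\boldsymbol\mu)}(X)=\boldsymbol{\mathcal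 A}\,P_{\boldsymbol Z}(\boldsymbol\mu)+P(\boldsymbol U).$$
   Context: $P_{\boldsymbol Z}(\boldsymbol\mu)$ denotes the adjusted expectation of $\boldsymbol\mu$ by the full collection $\boldsymbol Z$ (stacked into one vector), and $P_{P_{\boldsymbol Z}(\boldsymbol\mu)}(X)$ denotes the adjusted expectation of $X$ by the random vector $P_{\boldsymbol Z}(\boldsymbol\mu)$. The structure $Z_{ij}=\mu_i+\mathcal R_{ij}$ encodes second-order exchangeability of the members within each class $i$ (with class mean $\mu_i$), and implies $\mathrm{Cov}(Z_{ij},Z_{kl})=\mathrm{Cov}(\mu_i,\mu_k)$ for $i\neq k$ and $\mathrm{Cov}(Z_{ij},Z_{il})=\mathrm{Var}(\mu_i)$ for $j\ne l$. *)

From HB Require Import structures.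
From mathcomp Require Import all_boot all_order all_algebra.
From mathcomp Require Import boolp.
Set Implicit Arguments. Unset Strict Implicit. Unset Printing Implicit Defensive.
Import GRing.Theory Num.Theory.
Local Open Scope ring_scope.

(* Moore--Penrose generalised inverse: the (unique) B satisfying the four
   Penrose equations (real matrices, so transpose = adjoint). *)
Definition penrose (R : realFieldType) (p q : nat) (A : 'M[R]_(p, q))
    (B : 'M[R]_(q, p)) : Prop :=
  [/\ A *m B *m A = A, B *m A *m B = B,
      (A *m B)^T = A *m B & (B *m A)^T = B *m A].

Definition pinv (R : realFieldType) (p q : nat) (A : 'M[R]_(p, q)) : 'M[R]_(q, p) :=
  match pselect (exists B, penrose A B) with
  | left h => proj1_sig (cid h)
  | right _ => 0
  end.

(* Second-order (Bayes linear) belief specification: random quantities form a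
   real vector space Q containing the unit (constant) quantity [one];
   [Pr] is the prevision (expectation) and [PP x y] is the prevision P(xy) of
   products. *)
Record prevision_space (R : realFieldType) (Q : lmodType R) (one : Q)
    (Pr : Q -> R) (PP : Q -> Q -> R) : Prop := {
  Pr_lin : forall (a : R) (x y : Q), Pr (a *: x + y) = a * Pr x + Pr y;
  Pr_one : Pr one = 1;
  PP_linl : forall (a : R) (x y z : Q), PP (a *: x + y) z = a * PP x z + PP y z;
  PP_sym : forall x y, PP x y = PP y x;
  PP_one : forall x, PP one x = Pr x;
  PP_sq_ge0 : forall x, 0 <= PP x x }.

Section BayesLinear.
Variables (R : realFieldType) (Q : lmodType R) (one : Q)
  (Pr : Q -> R) (PP : Q -> Q -> R).

Definition cov (x y : Q) : R := PP x y - Pr x * Pr y.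

(* A random vector is a finite family X : T -> Q of random quantities
   (T a finite index type); it is stacked into coordinates 'I_#|T| via enum. *)
Definition Pvec (T : finType) (X : T -> Q) : 'cV[R]_#|T| :=
  \col_a Pr (X (enum_val a)).

Definition Cov (S T : finType) (X : S -> Q) (Y : T -> Q) : 'M[R]_(#|S|, #|T|) :=
  \matrix_(a, b) cov (X (enum_val a)) (Y (enum_val b)).

Definition adj_exp (S T : finType) (X : S -> Q) (W : T -> Q) : S -> Q :=
  let K := Cov X W *m pinv (Cov W W) in
  fun s => Pr (X s) *: one
           + \sum_(b < #|T|) K (enum_rank s) b *: (W (enum_val b) - Pr (W (enum_val b)) *: one).

End BayesLinear.

(* Adjusted expectation is affine in the adjusted quantity: if
   X = sum_i L_i Y_i + U with U uncorrelated with W, then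
   P_W(X) = sum_i L_i P_W(Y_i) + P(U).  Apply this with Y = mu both for W = Z
   and for W = P_Z(mu), with which U is uncorrelated too, being affine in Z.
   The theorem then reduces to the idempotence P_{P_Z(mu)}(mu) = P_Z(mu).
   With C = Cov(mu, Z), V = Var(Z) and the gain K = C V^+, this reads
   C K^T (K V K^T)^+ K = K.  As K V K^T = K C^T =: M, it says
   (M M^+ - 1) K = 0, which holds because F V F^T = 0 forces F V = 0 for the
   positive semidefinite V, and K = K V V^+.
   Beyond Z = mu + R and U being uncorrelated with mu and R, no hypothesis on
   the residuals R is needed. *)

From HB Require Import structures.
From mathcomp Require Import all_boot all_order all_algebra.
From mathcomp Require Import boolp reals ring lra.
Set Implicit Arguments.
Unset Strict Implicit.
Unset Printing Implicit Defensive.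
Import GRing.Theory Num.Theory.
Local Open Scope ring_scope.

Section RealMatrix.
Variable R : realFieldType.

Lemma quad_ge0_eq0 (a b : R) :
  0 <= b -> (forall t, 0 <= t ^+ 2 * b + 2 * t * a) -> a = 0.
Proof.
move=> b_ge0 quad_ge0; have b1_gt0 : 0 < b + 1 by lra.
set s := (b + 1)^-1; have s_gt0 : 0 < s by rewrite invr_gt0.
have sb : s * b = 1 - s.
  have := mulVf (lt0r_neq0 b1_gt0); rewrite -/s mulrDr mulr1 => ?; lra.
have := quad_ge0 (- a * s).
have e : (- a * s) ^+ 2 * b = a * a * s * (s * b) by ring.
have -> : (- a * s) ^+ 2 * b + 2 * (- a * s) * a = - (a * a) * (s * (1 + s)).
  by rewrite e sb; ring.
have ss : 0 < s * (1 + s) by nra.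
nra.
Qed.

Lemma rv_dot_self_eq0 k (u : 'rV[R]_k) : (u *m u^T) 0 0 = 0 -> u = 0.
Proof.
rewrite mxE => uu0; have sumsq0 : \sum_(j < k) u 0 j ^+ 2 = 0.
  by rewrite -[RHS]uu0; apply: eq_bigr => j _; rewrite mxE expr2.
apply/rowP => j; apply/eqP; rewrite mxE -sqrf_eq0; apply/eqP.
exact: (psumr_eq0P (fun i _ => sqr_ge0 (u 0 i)) sumsq0).
Qed.

Lemma row_free_gram_unitmx p q (A : 'M[R]_(p, q)) :
  row_free A -> A *m A^T \in unitmx.
Proof.
move=> freeA; rewrite -row_free_unit; apply: inj_row_free => v vAA0.
have vA0 : v *m A = 0.
  apply: rv_dot_self_eq0.
  by rewrite trmx_mul mulmxA -(mulmxA v) vAA0 mul0mx mxE.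
by apply/eqP; rewrite -(mulmx_free_eq0 _ freeA) vA0.
Qed.

Lemma penrose_unique p q (A : 'M[R]_(p, q)) B1 B2 :
  penrose A B1 -> penrose A B2 -> B1 = B2.
Proof.
case=> [a1 b1 c1 d1] [a2 b2 c2 d2].
have e1 : B1 = B1 *m A *m B2.
  rewrite {1}(_ : B1 = B1 *m B1^T *m A^T); last first.
    by rewrite -mulmxA -(trmx_mul A B1) c1 mulmxA b1.
  rewrite -{1}a2 (trmx_mul (A *m B2) A) (trmx_mul A B2).
  rewrite !mulmxA -(mulmxA B1) -(trmx_mul A B1) c1.
  by rewrite -(mulmxA _ B2^T) -(trmx_mul A B2) c2 !mulmxA b1.
have e2 : B2 = B1 *m A *m B2.
  rewrite {1}(_ : B2 = A^T *m B2^T *m B2); last first.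
    by rewrite -(trmx_mul B2 A) d2 b2.
  rewrite -{1}a1 (trmx_mul (A *m B1) A) (trmx_mul A B1).
  rewrite mulmxA -(trmx_mul B1 A) d1.
  rewrite -(mulmxA _ A^T) -(trmx_mul B2 A) d2.
  by rewrite -!mulmxA (mulmxA B2) b2.
by rewrite {1}e1 -e2.
Qed.

Lemma penrose_trmx p q (A : 'M[R]_(p, q)) B : penrose A B -> penrose A^T B^T.
Proof.
by case=> [a b c d]; split; rewrite -!trmx_mul ?mulmxA ?a ?b ?c ?d.
Qed.

Lemma penrose_full_rank_factor p q r (F : 'M[R]_(p, r)) (G : 'M[R]_(r, q)) :
  F^T *m F \in unitmx -> G *m G^T \in unitmx ->
  penrose (F *m G) (G^T *m invmx (G *m G^T) *m invmx (F^T *m F) *m F^T).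
Proof.
move=> uF uG; set Gi := invmx (G *m G^T); set Fi := invmx (F^T *m F).
have GK k (X : 'M_(k, r)) : X *m G *m G^T *m Gi = X.
  by rewrite -2!mulmxA (mulmxA G) mulmxV // mulmx1.
have FK k (X : 'M_(k, r)) : X *m Fi *m F^T *m F = X.
  by rewrite -2!mulmxA mulVmx // mulmx1.
have trFi : Fi^T = Fi by rewrite /Fi trmx_inv trmx_mul trmxK.
have trGi : Gi^T = Gi by rewrite /Gi trmx_inv trmx_mul trmxK.
split; rewrite !mulmxA ?GK ?FK //.
- by rewrite !trmx_mul trFi trmxK !mulmxA.
- by rewrite !trmx_mul trGi trmxK !mulmxA.
Qed.

Lemma penrose_exists p q (A : 'M[R]_(p, q)) : exists B, penrose A B.
Proof.
have uF : (col_base A)^T *m (col_base A) \in unitmx.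
  rewrite -{2}(trmxK (col_base A)); apply: row_free_gram_unitmx.
  by rewrite /row_free mxrank_tr; apply: col_base_full.
have uG := row_free_gram_unitmx (row_base_free A).
have := penrose_full_rank_factor uF uG; rewrite mulmx_base.
exact: ex_intro.
Qed.

Lemma pinv_penrose p q (A : 'M[R]_(p, q)) : penrose A (pinv A).
Proof.
rewrite /pinv; case: pselect => [h|[]]; first exact: proj2_sig (cid h).
exact: penrose_exists.
Qed.

Lemma trmx_pinv p q (A : 'M[R]_(p, q)) : (pinv A)^T = pinv A^T.
Proof.
exact: penrose_unique (penrose_trmx (pinv_penrose A)) (pinv_penrose _).
Qed.

Definition psdmx n (W : 'M[R]_n) := forall x : 'rV_n, 0 <= (x *m W *m x^T) 0 0.

Lemma psdmx_form_eq0 n (W : 'M[R]_n) (x : 'rV_n) :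
  W^T = W -> psdmx W -> (x *m W *m x^T) 0 0 = 0 -> x *m W = 0.
Proof.
move=> symW psdW xWx0; set y := x *m W.
(* Along x + t y the quadratic form is t^2 (y W y^T) + 2 t |y|^2. *)
have yWx : y *m W *m x^T = y *m y^T.
  by rewrite -mulmxA -symW -trmx_mul.
apply: rv_dot_self_eq0.
apply: (quad_ge0_eq0 (b := (y *m W *m y^T) 0 0)) => // t.
have := psdW (t *: y + x).
rewrite linearD linearZ /= !mulmxDl !mulmxDr -!scalemxAl -!scalemxAr yWx.
by move: xWx0; rewrite !mxE; lra.
Qed.

Lemma psdmx_gram_eq0 m n (W : 'M[R]_n) (F : 'M_(m, n)) :
  W^T = W -> psdmx W -> F *m W *m F^T = 0 -> F *m W = 0.
Proof.
move=> symW psdW FWF0; apply/row_matrixP => i; rewrite row_mul row0.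
apply: psdmx_form_eq0 => //; rewrite -row_mul.
transitivity ((F *m W *m F^T) i i); last by rewrite FWF0 mxE.
by rewrite !mxE; apply: eq_bigr => j _; rewrite !mxE.
Qed.

Lemma gain_idem p n (C : 'M[R]_(p, n)) (W : 'M[R]_n) :
  W^T = W -> psdmx W ->
  let K := C *m pinv W in C *m K^T *m pinv (K *m W *m K^T) *m K = K.
Proof.
move=> symW psdW K.
have [_ BWB _ _] := pinv_penrose W.
have symB : (pinv W)^T = pinv W by rewrite trmx_pinv symW.
have KWB : K *m (W *m pinv W) = K by rewrite -mulmxA [pinv W *m _]mulmxA BWB.
have CKt : C *m K^T = K *m C^T by rewrite trmx_mul symB mulmxA.
have KWKt : K *m W *m K^T = K *m C^T.
  by rewrite -CKt trmx_mul symB !mulmxA -(mulmxA K) KWB.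
rewrite CKt KWKt; set M := K *m C^T.
have [MDM _ _ _] := pinv_penrose M.
set X := M *m pinv M - 1%:M; set F := X *m K.
suff : F = 0 by rewrite /F mulmxBl mul1mx => /eqP; rewrite subr_eq0 => /eqP.
have XM0 : X *m M = 0 by rewrite mulmxBl MDM mul1mx subrr.
have FWFt : F *m W *m F^T = 0.
  have -> : F *m W *m F^T = X *m (K *m W *m K^T) *m X^T.
    by rewrite /F trmx_mul !mulmxA.
  by rewrite KWKt -/M XM0 mul0mx.
have FWB : F *m W *m pinv W = F by rewrite -mulmxA -mulmxA KWB.
by rewrite -FWB (psdmx_gram_eq0 symW psdW FWFt) mul0mx.
Qed.

End RealMatrix.

Section Prevision.
Context {R : realFieldType} {Q : lmodType R} {one : Q}
  {Pr : Q -> R} {PP : Q -> Q -> R}.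
Hypothesis HP : prevision_space one Pr PP.

Local Notation cov := (cov Pr PP).
Local Notation Cov := (Cov Pr PP).
Local Notation adj_exp := (adj_exp one Pr PP).

Lemma Pr0 : Pr 0 = 0.
Proof. by have := Pr_lin HP 1 0 0; rewrite scaler0 addr0 mul1r; lra. Qed.

Lemma PrD x y : Pr (x + y) = Pr x + Pr y.
Proof. by have := Pr_lin HP 1 x y; rewrite scale1r mul1r. Qed.

Lemma PrZ a x : Pr (a *: x) = a * Pr x.
Proof. by rewrite -[a *: x]addr0 (Pr_lin HP) Pr0 addr0. Qed.

Lemma Pr_sum (I : Type) (r : seq I) (P : pred I) (F : I -> Q) :
  Pr (\sum_(i <- r | P i) F i) = \sum_(i <- r | P i) Pr (F i).
Proof. exact: (big_morph Pr PrD Pr0). Qed.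

Lemma Pr_centre x : Pr (x - Pr x *: one) = 0.
Proof. by rewrite PrD -scaleNr PrZ (Pr_one HP) mulr1 subrr. Qed.

Lemma cov_sym x y : cov x y = cov y x.
Proof. by rewrite /cov (PP_sym HP) mulrC. Qed.

Lemma cov_linl a x y z : cov (a *: x + y) z = a * cov x z + cov y z.
Proof. by rewrite /cov (PP_linl HP) (Pr_lin HP); ring. Qed.

Lemma covDl x y z : cov (x + y) z = cov x z + cov y z.
Proof. by have := cov_linl 1 x y z; rewrite scale1r mul1r. Qed.

Lemma cov0l z : cov 0 z = 0.
Proof. by have := covDl 0 0 z; rewrite addr0; lra. Qed.

Lemma covZl a x z : cov (a *: x) z = a * cov x z.
Proof. by have := cov_linl a x 0 z; rewrite !addr0 cov0l addr0. Qed.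

Lemma covDr x y z : cov z (x + y) = cov z x + cov z y.
Proof. by rewrite !(cov_sym z) covDl. Qed.

Lemma cov_suml (I : Type) (r : seq I) (P : pred I) (F : I -> Q) z :
  cov (\sum_(i <- r | P i) F i) z = \sum_(i <- r | P i) cov (F i) z.
Proof. exact: (big_morph (cov^~ z) (fun x y => covDl x y z) (cov0l z)). Qed.

Lemma cov_constl c x : cov (c *: one) x = 0.
Proof. by rewrite covZl /cov (PP_one HP) (Pr_one HP) mul1r subrr mulr0. Qed.

Lemma cov_constr c x : cov x (c *: one) = 0.
Proof. by rewrite cov_sym cov_constl. Qed.

Lemma cov_centrel c x y : cov (x - c *: one) y = cov x y.
Proof. by rewrite -scaleNr covDl cov_constl addr0. Qed.

Lemma cov_centrer c x y : cov y (x - c *: one) = cov y x.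
Proof. by rewrite cov_sym cov_centrel cov_sym. Qed.

Lemma cov_ge0 x : 0 <= cov x x.
Proof.
rewrite -(cov_centrel (Pr x)) -(cov_centrer (Pr x)) /cov Pr_centre mulr0 subr0.
exact: (PP_sq_ge0 HP).
Qed.

Section RandomVector.
Variables (T : finType) (W : T -> Q).

Definition centred (b : 'I_#|T|) : Q :=
  W (enum_val b) - Pr (W (enum_val b)) *: one.

Definition lincomb (x : 'rV[R]_#|T|) : Q :=
  \sum_b x 0 b *: centred b.

Definition cov_row z : 'rV[R]_#|T| :=
  \row_c cov z (W (enum_val c)).

Definition adj_dev z : Q :=
  lincomb (cov_row z *m pinv (Cov W W)).

Lemma Pr_lincomb x : Pr (lincomb x) = 0.
Proof. by rewrite Pr_sum big1 // => b _; rewrite PrZ Pr_centre mulr0. Qed.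

Lemma cov_lincombl x z :
  cov (lincomb x) z = \sum_b x 0 b * cov (W (enum_val b)) z.
Proof.
by rewrite cov_suml; apply: eq_bigr => b _; rewrite covZl cov_centrel.
Qed.

Lemma cov_lincomb x y :
  cov (lincomb x) (lincomb y) = (x *m Cov W W *m y^T) 0 0.
Proof.
rewrite cov_lincombl mxE.
under eq_bigr do rewrite cov_sym cov_lincombl mulr_sumr.
rewrite exchange_big; apply: eq_bigr => c _.
rewrite !mxE mulr_suml; apply: eq_bigr => b _.
by rewrite !mxE cov_sym; ring.
Qed.

Lemma lincombD x y : lincomb (x + y) = lincomb x + lincomb y.
Proof. by rewrite -big_split; apply: eq_bigr => b _; rewrite mxE scalerDl. Qed.

Lemma lincombZ a x : lincomb (a *: x) = a *: lincomb x.
Proof. by rewrite scaler_sumr; apply: eq_bigr => b _; rewrite mxE scalerA. Qed.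

Lemma Cov_sym : (Cov W W)^T = Cov W W.
Proof. by apply/matrixP => i j; rewrite !mxE cov_sym. Qed.

Lemma Cov_psd : psdmx (Cov W W).
Proof. by move=> x; rewrite -cov_lincomb cov_ge0. Qed.

Lemma adj_devD z1 z2 : adj_dev (z1 + z2) = adj_dev z1 + adj_dev z2.
Proof.
rewrite /adj_dev -lincombD -mulmxDl; congr (lincomb (_ *m _)).
by apply/rowP => c; rewrite !mxE covDl.
Qed.

Lemma adj_devZ a z : adj_dev (a *: z) = a *: adj_dev z.
Proof.
rewrite /adj_dev -lincombZ scalemxAl; congr (lincomb (_ *m _)).
by apply/rowP => c; rewrite !mxE covZl.
Qed.

Lemma adj_dev_uncorr z : (forall t, cov z (W t) = 0) -> adj_dev z = 0.
Proof.
move=> z_uncorr; rewrite /adj_dev (_ : cov_row z = 0) ?mul0mx.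
  by rewrite /lincomb big1 // => b _; rewrite mxE scale0r.
by apply/rowP => c; rewrite !mxE z_uncorr.
Qed.

Lemma adj_dev_sum (I : finType) (L : I -> R) (Y : I -> Q) :
  adj_dev (\sum_i L i *: Y i) = \sum_i L i *: adj_dev (Y i).
Proof.
have adj_dev0 : adj_dev 0 = 0 by have := adj_devZ 0 0; rewrite !scale0r.
rewrite (big_morph _ adj_devD adj_dev0).
by apply: eq_bigr => i _; rewrite adj_devZ.
Qed.

End RandomVector.

Definition gain (S T : finType) (Y : S -> Q) (W : T -> Q) :=
  Cov Y W *m pinv (Cov W W).

Lemma adj_expE (S T : finType) (Y : S -> Q) (W : T -> Q) s :
  adj_exp Y W s = Pr (Y s) *: one + adj_dev W (Y s).
Proof.
congr (_ + _); apply: eq_bigr => b _; congr (_ *: _).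
by rewrite !mxE; apply: eq_bigr => c _; rewrite !mxE enum_rankK.
Qed.

Lemma adj_dev_gain (S T : finType) (Y : S -> Q) (W : T -> Q) s :
  adj_dev W (Y s) = lincomb W (row (enum_rank s) (gain Y W)).
Proof.
rewrite /adj_dev /gain row_mul; congr (lincomb W (_ *m _)).
by apply/rowP => c; rewrite !mxE enum_rankK.
Qed.

Lemma lincomb_mulmx (S T : finType) (V : S -> Q) (W : T -> Q)
    (K : 'M_(#|S|, #|T|)) :
  (forall a, centred V a = lincomb W (row a K)) ->
  forall y, lincomb V y = lincomb W (y *m K).
Proof.
move=> centredV y; rewrite /lincomb.
under eq_bigr do rewrite centredV /lincomb scaler_sumr.
rewrite exchange_big; apply: eq_bigr => b _; rewrite mxE scaler_suml.
by apply: eq_bigr => a _; rewrite !mxE scalerA.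
Qed.

Lemma adj_exp_lincomb (S I T : finType) (X : S -> Q) (Y : I -> Q) (U : S -> Q)
    (L : S -> I -> R) (W : T -> Q) :
  (forall s, X s = \sum_i L s i *: Y i + U s) ->
  (forall s t, cov (U s) (W t) = 0) ->
  adj_exp X W = fun s => \sum_i L s i *: adj_exp Y W i + Pr (U s) *: one.
Proof.
move=> X_def U_uncorr; apply: funext => s.
rewrite adj_expE X_def adj_devD adj_dev_sum adj_dev_uncorr // addr0.
rewrite PrD Pr_sum scalerDl scaler_suml addrAC -big_split /=.
by congr (_ + _); apply: eq_bigr => i _; rewrite adj_expE PrZ scalerDr scalerA.
Qed.

Lemma cov_adj_exp_uncorr (S T : finType) (Y : S -> Q) (W : T -> Q) z s :
  (forall t, cov z (W t) = 0) -> cov z (adj_exp Y W s) = 0.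
Proof.
move=> z_uncorr; rewrite adj_expE covDr cov_constr add0r /adj_dev cov_sym.
by rewrite cov_lincombl big1 // => b _; rewrite cov_sym z_uncorr mulr0.
Qed.

Section Readjustment.
Variables (S T : finType) (Y : S -> Q) (W : T -> Q).
Local Notation K := (gain Y W).
Local Notation V := (adj_exp Y W).

Lemma centred_adj_exp a : centred V a = lincomb W (row a K).
Proof.
rewrite /centred adj_expE adj_dev_gain enum_valK PrD PrZ (Pr_one HP) Pr_lincomb.
by rewrite mulr1 addr0 addrAC subrr add0r.
Qed.

Lemma Cov_adj_exp : Cov V V = K *m Cov W W *m K^T.
Proof.
apply/matrixP => a a'; rewrite mxE -(cov_centrel (Pr (V (enum_val a)))).
rewrite -(cov_centrer (Pr (V (enum_val a')))) -!/(centred V _).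
rewrite !centred_adj_exp cov_lincomb -row_mul !mxE.
by apply: eq_bigr => j _; rewrite !mxE.
Qed.

Lemma Cov_adj_exp_r : Cov Y V = Cov Y W *m K^T.
Proof.
apply/matrixP => s a; rewrite mxE -(cov_centrer (Pr (V (enum_val a)))).
rewrite -/(centred V _) centred_adj_exp cov_sym cov_lincombl !mxE.
by apply: eq_bigr => b _; rewrite !mxE cov_sym mulrC.
Qed.

Lemma adj_exp_idem : adj_exp Y V = V.
Proof.
apply: funext => s; rewrite !adj_expE !adj_dev_gain.
rewrite (lincomb_mulmx centred_adj_exp) -row_mul.
congr (_ + lincomb W (row _ _)).
rewrite /gain Cov_adj_exp Cov_adj_exp_r.
exact: gain_idem (Cov_sym W) (Cov_psd W).
Qed.

End Readjustment.
End Prevision.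

Theorem lemma3p1 (R : realType) (Q : lmodType R) (one : Q)
  (Pr : Q -> R) (PP : Q -> Q -> R)
  (m d : nat) (n : 'I_m -> nat)
  (mu : 'I_m -> 'I_d -> Q)
  (Res : {i : 'I_m & 'I_(n i)} -> 'I_d -> Q)
  (Z : {i : 'I_m & 'I_(n i)} -> 'I_d -> Q)
  (A : 'I_m -> 'M[R]_d) (U X : 'I_d -> Q) :
  prevision_space one Pr PP ->
  (0 < m)%N -> (forall i, 0 < n i)%N ->
  (* Z_ij = mu_i + R_ij *)
  (forall k a, Z k a = mu (tag k) a + Res k a) ->
  (* P(R_ij) = 0 *)
  (forall k a, Pr (Res k a) = 0) ->
  (* R_ij uncorrelated with every mu_k *)
  (forall k a i b, cov Pr PP (Res k a) (mu i b) = 0) ->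
  (* R_ij, R_kl uncorrelated for (i,j) <> (k,l) *)
  (forall k k' a b, k <> k' -> cov Pr PP (Res k a) (Res k' b) = 0) ->
  (* Var(R_ij) does not depend on j *)
  (forall i (j j' : 'I_(n i)) a b,
      cov Pr PP (Res (existT _ i j) a) (Res (existT _ i j) b)
      = cov Pr PP (Res (existT _ i j') a) (Res (existT _ i j') b)) ->
  (* U uncorrelated with all elements of all mu_i and all R_ij *)
  (forall a i b, cov Pr PP (U a) (mu i b) = 0) ->
  (forall a k b, cov Pr PP (U a) (Res k b) = 0) ->
  (* X = sum_i A_i mu_i + U *)
  (forall a, X a = \sum_(i < m) \sum_(c < d) A i a c *: mu i c + U a) ->
  let Zs := fun p : {i : 'I_m & 'I_(n i)} * 'I_d => Z p.1 p.2 in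
  let mus := fun p : 'I_m * 'I_d => mu p.1 p.2 in
  let PZmu := adj_exp one Pr PP mus Zs in
  adj_exp one Pr PP X Zs = adj_exp one Pr PP X PZmu /\
  adj_exp one Pr PP X Zs =
    (fun a => \sum_(i < m) \sum_(c < d) A i a c *: PZmu (i, c) + Pr (U a) *: one).
Proof.
move=> HP _ _ Z_def _ _ _ _ U_mu U_Res X_def Zs mus PZmu.
have X_lin a : X a = \sum_p A p.1 a p.2 *: mus p + U a.
  by rewrite X_def pair_big.
have U_Zs a t : cov Pr PP (U a) (Zs t) = 0.
  by rewrite /Zs Z_def (covDr HP) U_mu U_Res addr0.
have U_PZmu a t : cov Pr PP (U a) (PZmu t) = 0 by exact: cov_adj_exp_uncorr.
have adj_X_PZmu := adj_exp_lincomb HP X_lin U_PZmu.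
rewrite (adj_exp_idem HP) in adj_X_PZmu.
have -> : adj_exp one Pr PP X Zs = adj_exp one Pr PP X PZmu.
  by rewrite adj_X_PZmu (adj_exp_lincomb HP X_lin U_Zs).
split=> //; rewrite adj_X_PZmu; apply: funext => a.
by rewrite pair_big; congr (_ + _); apply: eq_bigr => -[i c].
Qed.
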